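(* Let $m>1$, let $[a,b]$ be the computational domain with mesh size $\Delta x=(b-a)/N_x$, cell centers $x_i=a+i\Delta x$ and interfaces $x_{i+1/2}=a+(i+1/2)\Delta x$, and time step $\Delta t$, $\lambda=\Delta t/\Delta x$. Given cell averages $\rho^n_i$, interface velocities $u^n_{i+1/2}$ and growth values $G^n_i$, the scheme proceeds as follows. (Prediction) $u^{n*}_{i+1/2}$ solves the linear system \[ \frac{u^{n*}_{i+1/2}-u^n_{i+1/2}}{\Delta t}=\frac{m}{\Delta x}\Big\{(\rho^n_{i+1})^{m-2}\Big(\frac{\rho^n_{i+3/2}u^{n*}_{i+3/2}-\rho^n_{i+1/2}u^{n*}_{i+1/2}}{\Delta x}-\rho^n_{i+1}G^n_i\Big)-(\rho^n_i)^{m-2}\Big(\frac{\rho^n_{i+1/2}u^{n*}_{i+1/2}-\rho^n_{i-1/2}u^{n*}_{i-1/2}}{\Delta x}-\rho^n_iG^n_i\Big)\Big\}, \] with $\rho^n_{i+1/2}=(\rho^n_i+\rho^n_{i+1})/2$. (Density update) \[ \frac{\rho^{n+1}_i-\rho^n_i}{\Delta t}+\frac{F^n_{i+1/2}-F^n_{i-1/2}}{\Delta x}=\rho^{n+1}_iG^n_i,\qquad F^n_{i+1/2}=\tfrac12\big[\rho^{Ln}_{i+1/2}u^{n*}_{i+1/2}+\rho^{Rn}_{i+1/2}u^{n*}_{i+1/2}-|u^{n*}_{i+1/2}|(\rho^{Rn}_{i+1/2}-\rho^{Ln}_{i+1/2})\big], \] where $\rho^{Ln}_{i+1/2}=\rho^n_i+\frac{\Delta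 x}{2}(\partial_x\rho)^n_i$, $\rho^{Rn}_{i+1/2}=\rho^n_{i+1}-\frac{\Delta x}{2}(\partial_x\rho)^n_{i+1}$, and the slope $(\partial_x\rho)^n_i$ is the minmod of $\frac{\rho^n_{i+1}-\rho^n_i}{\Delta x},\frac{\rho^n_{i+1}-\rho^n_{i-1}}{2\Delta x},\frac{\rho^n_i-\rho^n_{i-1}}{\Delta x}$ (the minimum if all three are positive, the maximum if all three are negative, and $0$ otherwise). (Correction) $u^{n+1}_{i+1/2}=-\frac{m}{m-1}\frac{(\rho^{n+1}_{i+1})^{m-1}-(\rho^{n+1}_i)^{m-1}}{\Delta x}$. Assume $0\le G^n_i\le G_{\max}$ for all $n,i$, and that there is a constant $U>0$ with $|u^{n*}_{i+1/2}|\le U$ for all $n,i$. Assume the initial cell averages satisfy $\rho^0_i\ge0$ for all $i$. If \[ \Delta t\le\frac{\Delta x}{2U}\qquad\text{and}\qquad 1-G_{\max}\Delta t>0, \] then $\rho^n_i\ge0$ for all $n\in\mathbb N$ and all $i$.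
   Context: This is a fully discrete scheme for the 1D cell density model $\partial_t\rho-\partial_x(\rho\,\partial_xp(\rho))=\rho G$, $p(\rho)=\frac{m}{m-1}\rho^{m-1}$, written with velocity $u=-\partial_xp(\rho)$ on a staggered grid ($\rho$ as cell averages, $u$ at cell interfaces). The paper phrases the velocity bound as $\max_{n,j}u^{n*}_{j+1/2}\le U$; the bound is used on the magnitude $|u^{n*}_{j+1/2}|$. *)

From Stdlib Require Import Reals Lra ZArith.
Open Scope R_scope.

(* Grid functions are indexed by (time step n : nat) and (space index i : Z).
   For interface quantities, index i stands for the interface x_{i+1/2}. *)

(* Real power x^y for x >= 0 (0^y = 0 for y <> 0, 0^0 = 1). *)
Definition pw (x y : R) : R :=
  if Rlt_dec 0 x then Rpower x y
  else if Req_EM_T y 0 then 1 else 0.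

Definition minmod3 (p q r : R) : R :=
  if Rlt_dec 0 p then
    (if Rlt_dec 0 q then (if Rlt_dec 0 r then Rmin p (Rmin q r) else 0) else 0)
  else if Rlt_dec p 0 then
    (if Rlt_dec q 0 then (if Rlt_dec r 0 then Rmax p (Rmax q r) else 0) else 0)
  else 0.

Definition slope (dx : R) (rho : Z -> R) (i : Z) : R :=
  minmod3 ((rho (i+1)%Z - rho i) / dx)
          ((rho (i+1)%Z - rho (i-1)%Z) / (2 * dx))
          ((rho i - rho (i-1)%Z) / dx).

Definition rhoL (dx : R) (rho : Z -> R) (i : Z) : R :=
  rho i + dx / 2 * slope dx rho i.
Definition rhoR (dx : R) (rho : Z -> R) (i : Z) : R :=
  rho (i+1)%Z - dx / 2 * slope dx rho (i+1)%Z.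

Definition flux (dx : R) (rho ustar : Z -> R) (i : Z) : R :=
  / 2 * (rhoL dx rho i * ustar i + rhoR dx rho i * ustar i
         - Rabs (ustar i) * (rhoR dx rho i - rhoL dx rho i)).

Definition rhoh (rho : Z -> R) (i : Z) : R := (rho i + rho (i+1)%Z) / 2.

Definition prediction (m dx dt : R) (rho u ustar G : Z -> R) : Prop :=
  forall i : Z,
    (ustar i - u i) / dt =
    m / dx *
      (pw (rho (i+1)%Z) (m - 2) *
         ((rhoh rho (i+1)%Z * ustar (i+1)%Z - rhoh rho i * ustar i) / dx
          - rho (i+1)%Z * G i)
       - pw (rho i) (m - 2) *
         ((rhoh rho i * ustar i - rhoh rho (i-1)%Z * ustar (i-1)%Z) / dx
          - rho i * G i)).

Definition density_update (dx dt : R) (rho rho1 ustar G : Z -> R) : Prop :=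
  forall i : Z,
    (rho1 i - rho i) / dt + (flux dx rho ustar i - flux dx rho ustar (i-1)%Z) / dx
    = rho1 i * G i.

Definition correction (m dx : R) (rho1 u1 : Z -> R) : Prop :=
  forall i : Z,
    u1 i = - (m / (m - 1)) * ((pw (rho1 (i+1)%Z) (m - 1) - pw (rho1 i) (m - 1)) / dx).

From Stdlib Require Import Reals Lra Lia ZArith.
Open Scope R_scope.

(* The minmod slope keeps both reconstructed interface values rho^L, rho^R
   between a cell average and the mean of two neighbouring averages, so they
   are nonnegative when the averages are.  The upwind flux then writes one
   step of the density update as
     dx (1 - dt G_i) rho^{n+1}_i
       = rho^L_{i+1/2} (dx/2 - dt u^+_{i+1/2}) + rho^R_{i-1/2} (dx/2 - dt u^-_{i-1/2})
         + dt u^-_{i+1/2} rho^R_{i+1/2} + dt u^+_{i-1/2} rho^L_{i-1/2},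
   with u^+ = max(u,0), u^- = max(-u,0); under dt |u*| <= dx/2 every term is
   nonnegative, and 1 - dt G_i > 0. *)

Lemma minmod3_bounds p q r : Rmin 0 p <= minmod3 p q r <= Rmax 0 r.
Proof.
  unfold minmod3, Rmin, Rmax.
  repeat destruct Rlt_dec; repeat destruct Rle_dec; lra.
Qed.

Section Reconstruction.

Variables (dx : R) (rho : Z -> R).
Hypothesis dx_gt0 : 0 < dx.

Lemma rhoL_ge_min i : Rmin (rho i) (rhoh rho i) <= rhoL dx rho i.
Proof.
  unfold rhoL, slope.
  destruct (minmod3_bounds ((rho (i+1)%Z - rho i) / dx)
              ((rho (i+1)%Z - rho (i-1)%Z) / (2 * dx))
              ((rho i - rho (i-1)%Z) / dx)) as [Hs _].
  set (s := minmod3 _ _ _) in *.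
  assert (Hjump : dx / 2 * ((rho (i+1)%Z - rho i) / dx) = (rho (i+1)%Z - rho i) / 2)
    by (field; lra).
  unfold Rmin at 1 in Hs; destruct Rle_dec.
  - apply (Rle_trans _ (rho i)); [apply Rmin_l | nra].
  - apply (Rle_trans _ (rhoh rho i)); [apply Rmin_r | unfold rhoh; nra].
Qed.

Lemma rhoR_ge_min i : Rmin (rho (i+1)%Z) (rhoh rho i) <= rhoR dx rho i.
Proof.
  unfold rhoR, slope.
  replace (i + 1 - 1)%Z with i by ring.
  destruct (minmod3_bounds ((rho (i+1+1)%Z - rho (i+1)%Z) / dx)
              ((rho (i+1+1)%Z - rho i) / (2 * dx))
              ((rho (i+1)%Z - rho i) / dx)) as [_ Hs].
  set (s := minmod3 _ _ _) in *.
  assert (Hjump : dx / 2 * ((rho (i+1)%Z - rho i) / dx) = (rho (i+1)%Z - rho i) / 2)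
    by (field; lra).
  unfold Rmax in Hs; destruct Rle_dec.
  - apply (Rle_trans _ (rhoh rho i)); [apply Rmin_r | unfold rhoh; nra].
  - apply (Rle_trans _ (rho (i+1)%Z)); [apply Rmin_l | nra].
Qed.

Hypothesis rho_ge0 : forall j, 0 <= rho j.

Lemma rhoh_nonneg i : 0 <= rhoh rho i.
Proof. unfold rhoh; pose proof (rho_ge0 i); pose proof (rho_ge0 (i+1)%Z); lra. Qed.

Lemma rhoL_nonneg i : 0 <= rhoL dx rho i.
Proof.
  eapply Rle_trans; [| apply rhoL_ge_min].
  apply Rmin_glb; [apply rho_ge0 | apply rhoh_nonneg].
Qed.

Lemma rhoR_nonneg i : 0 <= rhoR dx rho i.
Proof.
  eapply Rle_trans; [| apply rhoR_ge_min].
  apply Rmin_glb; [apply rho_ge0 | apply rhoh_nonneg].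
Qed.

End Reconstruction.

Lemma rhoL_add_rhoR_pred dx rho i : rhoL dx rho i + rhoR dx rho (i-1) = 2 * rho i.
Proof. unfold rhoL, rhoR; replace (i - 1 + 1)%Z with i by ring; ring. Qed.

Lemma flux_upwind dx rho us i :
  flux dx rho us i = Rmax (us i) 0 * rhoL dx rho i + Rmin (us i) 0 * rhoR dx rho i.
Proof.
  unfold flux, Rmax, Rmin.
  destruct Rle_dec; [rewrite Rabs_left1 by lra | rewrite Rabs_right by lra]; field.
Qed.

Lemma upwind_parts_bounds u :
  0 <= Rmax u 0 <= Rabs u /\ 0 <= - Rmin u 0 <= Rabs u.
Proof.
  unfold Rmax, Rmin, Rabs; destruct Rle_dec, Rcase_abs; lra.
Qed.

Lemma density_update_upwind_form dx dt rho rho1 us g i :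
  0 < dx -> 0 < dt -> density_update dx dt rho rho1 us g ->
  dx * (1 - dt * g i) * rho1 i =
    rhoL dx rho i * (dx / 2 - dt * Rmax (us i) 0)
    + rhoR dx rho (i-1) * (dx / 2 + dt * Rmin (us (i-1)%Z) 0)
    - dt * Rmin (us i) 0 * rhoR dx rho i
    + dt * Rmax (us (i-1)%Z) 0 * rhoL dx rho (i-1).
Proof.
  intros Hdx Hdt Hupd.
  pose proof (Hupd i) as E.
  rewrite !flux_upwind in E.
  pose proof (rhoL_add_rhoR_pred dx rho i) as Hcons.
  apply (Rmult_eq_compat_l (dt * dx)) in E.
  replace (dt * dx * ((rho1 i - rho i) / dt + _)) with
    (dx * (rho1 i - rho i)
     + dt * (Rmax (us i) 0 * rhoL dx rho i + Rmin (us i) 0 * rhoR dx rho i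
             - (Rmax (us (i-1)%Z) 0 * rhoL dx rho (i-1)
                + Rmin (us (i-1)%Z) 0 * rhoR dx rho (i-1))))
    in E by (field; lra).
  nra.
Qed.

Lemma density_update_nonneg dx dt rho rho1 us g i :
  0 < dx -> 0 < dt -> (forall j, 0 <= rho j) ->
  (forall j, Rabs (us j) * dt <= dx / 2) -> 0 <= g i -> g i * dt < 1 ->
  density_update dx dt rho rho1 us g -> 0 <= rho1 i.
Proof.
  intros Hdx Hdt Hrho Hcfl Hg0 Hg1 Hupd.
  pose proof (density_update_upwind_form dx dt rho rho1 us g i Hdx Hdt Hupd) as Hform.
  pose proof (rhoL_nonneg dx rho Hdx Hrho i); pose proof (rhoL_nonneg dx rho Hdx Hrho (i-1)).
  pose proof (rhoR_nonneg dx rho Hdx Hrho i); pose proof (rhoR_nonneg dx rho Hdx Hrho (i-1)).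
  destruct (upwind_parts_bounds (us i)); destruct (upwind_parts_bounds (us (i-1)%Z)).
  pose proof (Hcfl i); pose proof (Hcfl (i-1)%Z).
  assert (0 <= rhoL dx rho i * (dx / 2 - dt * Rmax (us i) 0))
    by (apply Rmult_le_pos; nra).
  assert (0 <= rhoR dx rho (i-1) * (dx / 2 + dt * Rmin (us (i-1)%Z) 0))
    by (apply Rmult_le_pos; nra).
  assert (0 <= - (dt * Rmin (us i) 0) * rhoR dx rho i) by (apply Rmult_le_pos; nra).
  assert (0 <= dt * Rmax (us (i-1)%Z) 0 * rhoL dx rho (i-1)) by (apply Rmult_le_pos; nra).
  assert (Hcoef : 0 < dx * (1 - dt * g i)) by nra.
  nra.
Qed.

Theorem mainTheorem3
  (m a b : R) (Nx : nat) (dt U Gmax : R)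
  (rho u ustar G : nat -> Z -> R)
  (Hm : 1 < m) (Hab : a < b) (HNx : (0 < Nx)%nat) (Hdt : 0 < dt) (HU : 0 < U)
  (Hpred : forall n, prediction m ((b - a) / INR Nx) dt (rho n) (u n) (ustar n) (G n))
  (Hupd : forall n, density_update ((b - a) / INR Nx) dt (rho n) (rho (S n)) (ustar n) (G n))
  (Hcorr : forall n, correction m ((b - a) / INR Nx) (rho (S n)) (u (S n)))
  (HG : forall n i, 0 <= G n i <= Gmax)
  (Hus : forall n i, Rabs (ustar n i) <= U)
  (H0 : forall i, 0 <= rho O i)
  (HCFL : dt <= ((b - a) / INR Nx) / (2 * U))
  (HGdt : 1 - Gmax * dt > 0) :
  forall n i, 0 <= rho n i.
Proof.
  set (dx := (b - a) / INR Nx) in *.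
  assert (Hdx : 0 < dx).
  { apply Rdiv_lt_0_compat; [lra | apply lt_0_INR; lia]. }
  assert (HdtU : U * dt <= dx / 2).
  { apply (Rmult_le_compat_l (2 * U)) in HCFL; [| lra].
    replace (2 * U * (dx / (2 * U))) with dx in HCFL by (field; lra); lra. }
  induction n as [| n IH]; [exact H0 |].
  intro i.
  apply (density_update_nonneg dx dt (rho n) (rho (S n)) (ustar n) (G n));
    [exact Hdx | exact Hdt | exact IH | | apply HG | | apply Hupd].
  - intro j; pose proof (Hus n j); nra.
  - destruct (HG n i); nra.
Qed.
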